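(* Let $G$ be an innately transitive permutation group on a finite set $\Omega$ with plinth $M$, and fix $\omega\in\Omega$. Then the map $\mathcal E\mapsto\mathcal K_\omega(\mathcal E)$ is a bijection from $\mathrm{CD}(G)$ to the set of Cartesian systems of subgroups of $M$ with respect to $\omega$ that are invariant under conjugation by $G_\omega$.
   Context: A permutation group is innately transitive if it has a transitive minimal normal subgroup, called a plinth. A Cartesian decomposition of $\Omega$ is a set $\mathcal E=\{\Gamma_1,\dots,\Gamma_\ell\}$, $\ell\ge2$, of partitions of $\Omega$ with $|\gamma_1\cap\cdots\cap\gamma_\ell|=1$ for all $\gamma_i\in\Gamma_i$; $\mathrm{CD}(G)$ is the set of $G$-invariant Cartesian decompositions of $\Omega$. (Every $\mathcal E\in\mathrm{CD}(G)$ has each partition fixed by $M$.) For such $\mathcal E$, $\mathcal K_\omega(\mathcal E)=\{M_{\gamma_1},\dots,M_{\gamma_\ell}\}$, where $\gamma_i$ is the block of $\Gamma_i$ containing $\omega$ and $M_{\gamma_i}$ its setwise stabiliser. A set $\{K_1,\dots,K_\ell\}$ ($\ell\ge2$) of subgroups of $M$ is a Cartesian system of subgroups of $M$ with respect to $\omega$ if $\bigcap_iK_i=M_\omega$ and $K_i(\bigcap_{j\ne i}K_j)=M$ for all $i$. *)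

From HB Require Import structures.
From mathcomp Require Import all_boot all_fingroup all_solvable.
Set Implicit Arguments. Unset Strict Implicit. Unset Printing Implicit Defensive.

Section CD.
Variable T : finType.
Local Open Scope group_scope.

Definition perm_part (g : {perm T}) (P : {set {set T}}) : {set {set T}} :=
  [set [set g x | x in B] | B : {set T} in P].

Definition cart_decomp (E : {set {set {set T}}}) : Prop :=
  [/\ (2 <= #|E|)%N,
      {in E, forall P, partition P [set: T]} &
      forall f : {set {set T}} -> {set T},
        {in E, forall P, f P \in P} -> #|\bigcap_(P in E) f P| = 1%N].

Definition CD (G : {group {perm T}}) (E : {set {set {set T}}}) : Prop :=
  cart_decomp E /\ {in G, forall g, {in E, forall P, perm_part g P \in E}}.

Definition Kmap (M : {group {perm T}}) (w : T) (E : {set {set {set T}}})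
  : {set {set {perm T}}} :=
  [set 'N_M(pblock P w | 'P) | P in E].

Definition cart_system (M : {group {perm T}}) (w : T) (S : {set {set {perm T}}})
  : Prop :=
  [/\ (2 <= #|S|)%N,
      {in S, forall K, group_set K /\ K \subset M},
      \bigcap_(K in S) K = 'C_M[w | 'P] &
      {in S, forall K, K * (\bigcap_(K' in S :\ K) K') = M}].

Definition conj_invariant (G : {group {perm T}}) (w : T) (S : {set {set {perm T}}})
  : Prop :=
  {in 'C_G[w | 'P], forall g, {in S, forall K, K :^ g \in S}}.

End CD.

From HB Require Import structures.
From mathcomp Require Import all_boot all_fingroup all_solvable.
From mathcomp Require Import zify.
Set Implicit Arguments. Unset Strict Implicit. Unset Printing Implicit Defensive.
Local Open Scope group_scope.

(* The plinth M fixes every partition of a G-invariant Cartesian decomposition E.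
   Otherwise pick a prime p dividing the number of blocks of a moved partition:
   the set A of moved partitions whose number of blocks is divisible by p is
   G-invariant, so by minimal normality M acts faithfully on A and |M| divides
   |A|!; but p^|A| divides |Omega| = prod |Gamma|, which divides |M| by
   transitivity, contradicting Legendre's bound v_p(|A|!) < |A|.
   An M-invariant partition is the M-orbit of its block through omega, hence is
   determined by the stabiliser of that block, which gives injectivity.
   Conversely, a subgroup K containing M_omega defines the M-invariant partition
   with blocks omega^(K m); the factorisations K_i (cap_{j<>i} K_j) = M say that
   any choice of cosets K_i m_i has a common element, so every choice of blocks
   meets in exactly one point. *)

Lemma sum_divn_expn_lt p m n : 1 < p -> 0 < n ->
  (\sum_(1 <= k < m.+1) n %/ p ^ k < n)%N.
Proof.
move=> p_gt1; elim: m n => [|m IHm] n n_gt0; first by rewrite big_geq.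
rewrite big_ltn // expn1 big_add1 /=.
under eq_bigr => k _ do rewrite expnS divnMA.
have [->|q_gt0] := posnP (n %/ p).
  by under eq_bigr => k _ do rewrite div0n; rewrite big1 // add0n.
have := IHm _ q_gt0.
have : (2 * (n %/ p) <= n)%N.
  by apply: leq_trans (leq_divM n p); rewrite mulnC leq_mul2l p_gt1 orbT.
lia.
Qed.

Lemma logn_fact_lt p n : prime p -> 0 < n -> (logn p n`! < n)%N.
Proof.
by move=> p_pr n_gt0; rewrite logn_fact //; apply: sum_divn_expn_lt (prime_gt1 p_pr) n_gt0.
Qed.

Lemma card_dvdn_fact_faithful (aT rT : finType) (to : {action {perm aT} &-> rT})
    (M : {group {perm aT}}) (A : {set rT}) :
  M \subset 'N(A | to) -> 'C_M(A | to) = 1 -> #|M| %| #|A|`!.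
Proof.
move=> nAM cAM1.
pose M1 := (actperm to @* M)%G.
have cardM1 : #|M1| = #|M|.
  rewrite card_morphim setTI -indexgI (_ : M :&: _ = 1) ?indexg1 //.
  apply/trivgP; rewrite -cAM1 setIS //; apply/subsetP=> m ker_m.
  have : m \in 'C([set: rT] | to) by rewrite -(ker_actperm to).
  exact/subsetP/astabS/subsetT.
have nAM1 : M1 \subset 'N(A | 'P).
  apply/subsetP=> _ /morphimP[m _ Mm ->]; apply/astabsP=> x.
  rewrite -[act _ x _]/(actperm to m x) actpermE.
  by move/astabsP: (subsetP nAM m Mm); apply.
have cardM2 : #|restr_perm A @* M1| = #|M1|.
  rewrite card_morphim (setIidPr nAM1) -indexgI (_ : M1 :&: _ = 1) ?indexg1 //.
  apply/trivgP/subsetP=> _ /setIP[/morphimP[m _ Mm ->]] ker_m.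
  have /astabP cAm : actperm to m \in 'C(A | 'P) by rewrite -(ker_restr_perm A).
  suff: m \in 'C_M(A | to) by rewrite cAM1 => /set1P->; rewrite morph1 set11.
  by rewrite inE Mm; apply/astabP=> x /cAm; rewrite /= /aperm actpermE.
rewrite -cardM1 -cardM2 -(perm.card_Sym A); apply: cardSg.
by apply/subsetP=> _ /morphimP[m _ _ ->]; rewrite inE restr_perm_on.
Qed.

Lemma minnormal_astab1 (aT rT : finType) (to : {action {perm aT} &-> rT})
    (G M : {group {perm aT}}) (A : {set rT}) :
  minnormal M G -> G \subset 'N(A | to) -> ~~ (M \subset 'C(A | to)) ->
  'C_M(A | to) = 1.
Proof.
case/mingroupP=> /andP[_ nMG] minM nAG cAM; apply/eqP; apply: contraR cAM => ntC.
have nCG : G \subset 'N('C_M(A | to)).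
  by rewrite normsI // (subset_trans nAG) ?astab_norm.
have := minM ('C_M(A | to))%G; rewrite /= ntC nCG => /(_ isT (subsetIl _ _)) eqC.
by rewrite -eqC subsetIr.
Qed.

Section PermPartitions.
Variable T : finType.
Implicit Types (P : {set {set T}}) (B : {set T}) (g : {perm T}) (x y : T).

Lemma perm_partE g P : perm_part g P = (('P^*)^*)%act P g.
Proof. by []. Qed.

Lemma perm_partM g h P : perm_part (g * h) P = perm_part h (perm_part g P).
Proof. by rewrite !perm_partE actM. Qed.

Lemma perm_part_inj g : injective (perm_part g).
Proof. by move=> P Q; rewrite !perm_partE; apply: act_inj. Qed.

Lemma card_perm_part g P : #|perm_part g P| = #|P|.
Proof. by rewrite card_imset //; apply/imset_inj/perm_inj. Qed.

Lemma mem_imset_perm g B y : (g y \in [set g z | z in B]) = (y \in B).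
Proof. by rewrite mem_imset //; apply: perm_inj. Qed.

Section Partition.
Variable P : {set {set T}}.
Hypothesis partP : partition P [set: T].

Lemma pblockT_mem x : pblock P x \in P.
Proof. by case/and3P: partP => /eqP covP _ _; rewrite pblock_mem // covP inE. Qed.

Lemma mem_pblockT x : x \in pblock P x.
Proof. by case/and3P: partP => /eqP covP _ _; rewrite mem_pblock covP inE. Qed.

Lemma pblockT_eq x B : B \in P -> x \in B -> pblock P x = B.
Proof. by case/and3P: partP => _ tiP _; apply: def_pblock. Qed.

Lemma in_pblockT x y : (y \in pblock P x) = (pblock P y == pblock P x).
Proof.
apply/idP/eqP=> [/pblockT_eq-> //|<-]; [exact: pblockT_mem | exact: mem_pblockT].
Qed.

Lemma partT_neq0 B : B \in P -> B != set0.
Proof. by apply: contraTneq => ->; case/and3P: partP. Qed.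

Lemma perm_part_partition g : partition (perm_part g P) [set: T].
Proof.
case/and3P: partP => _ tiP nzP; apply/and3P; split.
- apply/eqP/setP=> x; rewrite inE; apply/bigcupP.
  exists [set g y | y in pblock P (g^-1 x)]; first exact/imset_f/pblockT_mem.
  by rewrite -{1}(permKV g x) mem_imset_perm mem_pblockT.
- by rewrite imset_trivIset //; apply: perm_inj.
- apply/imsetP=> -[B PB /esym/eqP]; rewrite imset_eq0 => /eqP B0.
  by rewrite -B0 PB in nzP.
Qed.

Lemma pblock_perm_part g x :
  pblock (perm_part g P) (g x) = [set g y | y in pblock P x].
Proof.
case/and3P: (perm_part_partition g) => _ tiP _.
apply: def_pblock tiP (imset_f _ (pblockT_mem x)) _.
by rewrite mem_imset_perm mem_pblockT.
Qed.

Lemma pblock_perm_part_id g x : perm_part g P = P ->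
  pblock P (g x) = [set g y | y in pblock P x].
Proof. by move=> gP; rewrite -{1}gP pblock_perm_part. Qed.

End Partition.

Lemma perm_part_preim (X Y : eqType) g (f : T -> X) (h : T -> Y) (c : X -> Y) :
  injective c -> (forall x, h (g x) = c (f x)) ->
  perm_part g (preim_partition f [set: T]) = preim_partition h [set: T].
Proof.
move=> c_inj hgf.
have blockE x : [set g y | y in [set y in [set: T] | f x == f y]] =
                [set y in [set: T] | h (g x) == h y].
  apply/setP=> z; rewrite -{1}(permKV g z) mem_imset_perm !inE.
  by rewrite -{2}(permKV g z) !hgf (inj_eq c_inj).
apply/setP=> B; apply/imsetP/imsetP=> [[_ /imsetP[x _ ->] ->]|[x _ ->]].
  by exists (g x); rewrite ?blockE.
by exists [set y in [set: T] | f (g^-1 x) == f y]; rewrite ?imset_f ?blockE ?permKV.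
Qed.

End PermPartitions.

Section CartesianDecomposition.
Variables (T : finType) (E : {set {set {set T}}}).
Hypothesis cdE : cart_decomp E.

Lemma cd_partition P : P \in E -> partition P [set: T].
Proof. by case: cdE => _ partE _; apply: partE. Qed.

Lemma cd_pblock_inj x y : {in E, forall P, pblock P x = pblock P y} -> x = y.
Proof.
move=> eq_xy; have [_ _ /(_ (pblock^~ x))] := cdE.
have memE : {in E, forall P, pblock P x \in P}.
  by move=> P /cd_partition/pblockT_mem.
case/(_ memE)/eqP/cards1P=> a capE.
have /[!capE] /set1P-> : x \in \bigcap_(P in E) pblock P x.
  by apply/bigcapP=> P /cd_partition/mem_pblockT.
have /[!capE] /set1P-> // : y \in \bigcap_(P in E) pblock P x.
by apply/bigcapP=> P PE; rewrite eq_xy // mem_pblockT ?cd_partition.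
Qed.

Lemma cd_meet (f : {set {set T}} -> {set T}) :
  {in E, forall P, f P \in P} -> exists x, {in E, forall P, x \in f P}.
Proof.
case: cdE => _ _ meetE /meetE/eqP/cards1P[a capE].
by exists a => P PE; have /bigcapP-> : a \in \bigcap_(P in E) f P by rewrite capE set11.
Qed.

Lemma card_cd : #|T| = (\prod_(P in E) #|P|)%N.
Proof.
pose blocks x : {ffun {set {set T}} -> {set T}} :=
  [ffun P => if P \in E then pblock P x else set0].
have blocks_inj : injective blocks.
  by move=> x y /ffunP eq_xy; apply: cd_pblock_inj => P PE; have := eq_xy P; rewrite !ffunE PE.
have -> : #|T| = #|pfamily set0 E (fun P : {set {set T}} => P)|.
  rewrite -cardsT -(card_imset _ blocks_inj); apply: eq_card => f.
  apply/imsetP/pfamilyP=> [[x _ ->]|[suppf memf]].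
    split=> [|P PE]; last by rewrite ffunE PE pblockT_mem ?cd_partition.
    by apply/subsetP=> P; rewrite inE ffunE; case: (P \in E); rewrite ?eqxx.
  have [x fx] := cd_meet memf; exists x => //; apply/ffunP=> P; rewrite ffunE.
  case: ifP => [PE | /negbT PnE]; first by rewrite (pblockT_eq (cd_partition PE) (memf P PE)) ?fx.
  by apply/eqP; apply: contraNT PnE => nzf; apply: (subsetP suppf); rewrite inE.
rewrite card_pfamily foldrE big_map.
by rewrite big_enum_cond /=; apply: eq_bigl => P; rewrite andbT.
Qed.

End CartesianDecomposition.

Lemma perm_part_trivial (T : finType) (P : {set {set T}}) (g : {perm T}) :
  partition P [set: T] -> #|P| <= 1 -> perm_part g P = P.
Proof.
case/and3P=> /eqP covP _ _; rewrite leq_eqVlt ltnS leqn0 cards_eq0.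
case/orP=> [/cards1P[B PB] | /eqP P0]; last first.
  by rewrite P0 /perm_part imset0.
rewrite PB cover1 in covP; rewrite PB /perm_part imset_set1 covP; congr [set _].
by apply/eqP; rewrite eqEcard subsetT card_imset ?leqnn //; apply: perm_inj.
Qed.

Lemma cd_expn_dvdn (T : finType) (E A : {set {set {set T}}}) p :
  cart_decomp E -> A \subset E -> {in A, forall P : {set {set T}}, p %| #|P|} ->
  p ^ #|A| %| #|T|.
Proof.
move=> cdE sAE pA; rewrite (card_cd cdE) (big_setID A) /= (setIidPr sAE).
rewrite -prod_nat_const dvdn_mulr //.
by apply: (big_ind2 (fun a b => a %| b)) => // *; apply: dvdn_mul.
Qed.

Lemma moved_parts_norm (T : finType) (G M : {group {perm T}})
    (E : {set {set {set T}}}) (q : pred nat) :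
  M <| G -> {in G, forall g, {in E, forall P, perm_part g P \in E}} ->
  G \subset 'N([set P in E | q #|P| && [exists m in M, perm_part m P != P]] | ('P^*)^*).
Proof.
move=> nsMG nEG; set A := [set P in E | _].
have GA g P : g \in G -> P \in A -> perm_part g P \in A.
  move=> Gg; rewrite !inE card_perm_part => /and3P[PE -> /exists_inP[m Mm mP]].
  rewrite nEG //=; apply/exists_inP; exists (m ^ g).
    by rewrite memJ_norm ?(subsetP (normal_norm nsMG)).
  by rewrite -perm_partM conjgE !mulgA mulgV mul1g perm_partM (inj_eq (@perm_part_inj _ g)).
apply/subsetP=> g Gg; apply/astabsP=> P; apply/idP/idP; last exact: GA.
by move/(GA g^-1 _ (groupVr Gg)); rewrite perm_partE actK.
Qed.

Lemma plinth_fixes_cd_part (T : finType) (G M : {group {perm T}})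
    (E : {set {set {set T}}}) :
  M <| G -> minnormal M G -> [transitive M, on [set: T] | 'P] -> CD G E ->
  {in M, forall m, {in E, forall P, perm_part m P = P}}.
Proof.
move=> nsMG minM trM [cdE nEG] m0 Mm0 P0 P0E; apply/eqP; apply: contraT => m0P0.
have partP0 := cd_partition cdE P0E.
have P0_gt1 : 1 < #|P0|.
  by rewrite ltnNge; apply: contra m0P0 => /(perm_part_trivial m0 partP0)->.
pose p := pdiv #|P0|; have p_pr : prime p := pdiv_prime P0_gt1.
pose to := (('P^*)^*)%act : {action {perm T} &-> {set {set T}}}.
pose A := [set P in E | dvdn p #|P| && [exists m in M, perm_part m P != P]].
have P0A : P0 \in A by rewrite !inE P0E pdiv_dvd; apply/exists_inP; exists m0.
have nAG : G \subset 'N(A | to) by apply: moved_parts_norm.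
have cAM1 : 'C_M(A | to) = 1.
  apply: minnormal_astab1 minM nAG _; apply: contra m0P0 => /subsetP/(_ m0 Mm0).
  by move/astabP/(_ P0 P0A); rewrite -perm_partE => ->.
have M_dvd_fact : #|M| %| #|A|`!.
  exact: card_dvdn_fact_faithful (subset_trans (normal_sub nsMG) nAG) cAM1.
have [B P0B] : exists B, B \in P0 by apply/card_gt0P/ltnW.
have /set0Pn[x _] := partT_neq0 partP0 P0B.
have T_dvd_M : #|T| %| #|M|.
  by rewrite -cardsT -(atransP trM _ (in_setT x)) card_orbit dvdn_indexg.
have pA_dvd_T : p ^ #|A| %| #|T|.
  apply: cd_expn_dvdn cdE _ _; first by apply/subsetP=> P /setIdP[].
  by move=> P /setIdP[_ /andP[]].
have A_gt0 : 0 < #|A| by apply/card_gt0P; exists P0.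
have := logn_fact_lt p_pr A_gt0; rewrite ltnNge -pfactor_dvdn ?fact_gt0 //.
by rewrite (dvdn_trans pA_dvd_T (dvdn_trans T_dvd_M M_dvd_fact)).
Qed.

Section InvariantPartitions.
Variables (T : finType) (M : {group {perm T}}) (w : T).
Hypothesis trM : [transitive M, on [set: T] | 'P].
Implicit Types (P Q : {set {set T}}) (m : {perm T}) (x : T).

Definition inv_partition P :=
  partition P [set: T] /\ {in M, forall m, perm_part m P = P}.

Lemma transitive_witness x : exists2 m, m \in M & x = m w.
Proof. by have [m Mm ->] := atransP2 trM (in_setT w) (in_setT x); exists m. Qed.

Lemma mem_pblock_stab P m : inv_partition P ->
  (m \in 'N_M(pblock P w | 'P)) = (m \in M) && (m w \in pblock P w).
Proof.
case=> partP invP; rewrite inE; case Mm: (m \in M) => //=.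
apply/astabsP/idP=> [stab_m | mw y].
  by have := stab_m w; rewrite /= /aperm => ->; apply: mem_pblockT.
rewrite /= /aperm -{1}(pblockT_eq partP (pblockT_mem partP w) mw).
by rewrite pblock_perm_part_id ?invP // mem_imset_perm.
Qed.

Lemma pblock_stab_orbit P : inv_partition P ->
  pblock P w = [set m w | m : {perm T} in 'N_M(pblock P w | 'P)].
Proof.
move=> invP; apply/setP=> x; apply/idP/imsetP=> [Px | [m + ->]].
  have [m Mm def_x] := transitive_witness x.
  by exists m; rewrite // mem_pblock_stab // Mm -def_x.
by rewrite mem_pblock_stab // => /andP[].
Qed.

Lemma inv_partition_orbit P : inv_partition P ->
  P = [set [set m y | y in pblock P w] | m : {perm T} in M].
Proof.
case=> partP invP; apply/setP=> B; apply/idP/imsetP=> [PB | [m Mm ->]].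
  have /set0Pn[x Bx] := partT_neq0 partP PB.
  have [m Mm def_x] := transitive_witness x.
  by exists m; rewrite // -pblock_perm_part_id ?invP // -def_x (pblockT_eq partP PB Bx).
by rewrite -pblock_perm_part_id ?invP ?pblockT_mem.
Qed.

Lemma pblock_stab_inj P Q : inv_partition P -> inv_partition Q ->
  'N_M(pblock P w | 'P) = 'N_M(pblock Q w | 'P) -> P = Q.
Proof.
move=> invP invQ eqNPQ.
have eqPQw : pblock P w = pblock Q w.
  by rewrite (pblock_stab_orbit invP) eqNPQ -(pblock_stab_orbit invQ).
by rewrite (inv_partition_orbit invP) eqPQw -(inv_partition_orbit invQ).
Qed.

End InvariantPartitions.

Section CDToCartesianSystem.
Variables (T : finType) (G M : {group {perm T}}) (w : T) (E : {set {set {set T}}}).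
Hypotheses (nsMG : M <| G) (minM : minnormal M G).
Hypotheses (trM : [transitive M, on [set: T] | 'P]) (cdG : CD G E).
Let cdE : cart_decomp E := proj1 cdG.
Let nEG : {in G, forall g, {in E, forall P, perm_part g P \in E}} := proj2 cdG.
Let partE : {in E, forall P, partition P [set: T]} := cd_partition cdE.

Lemma cd_inv_partition P : P \in E -> inv_partition M P.
Proof.
move=> PE; split=> [|m Mm]; first exact: (cd_partition cdE PE).
exact: plinth_fixes_cd_part nsMG minM trM cdG m Mm P PE.
Qed.

Lemma cd_mem_pblock_stab P m : P \in E ->
  (m \in 'N_M(pblock P w | 'P)) = (m \in M) && (m w \in pblock P w).
Proof. by move=> PE; rewrite mem_pblock_stab //; apply: cd_inv_partition. Qed.

Lemma mem_Kmap K : K \in Kmap M w E -> exists2 P, P \in E & K = 'N_M(pblock P w | 'P).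
Proof. by case/imsetP=> P PE ->; exists P. Qed.

Lemma card_Kmap : #|Kmap M w E| = #|E|.
Proof.
by apply: card_in_imset => P Q PE QE; apply: (pblock_stab_inj trM); apply: cd_inv_partition.
Qed.

Lemma bigcap_Kmap : \bigcap_(K in Kmap M w E) K = 'C_M[w | 'P].
Proof.
apply/setP=> m; rewrite inE; apply/bigcapP/andP=> [mK | [Mm /astab1P mw] _ /mem_Kmap[P PE ->]].
  have [P PE] : exists P, P \in E by apply/card_gt0P/ltnW; case: cdE.
  have := mK _ (imset_f _ PE); rewrite cd_mem_pblock_stab // => /andP[Mm _].
  split=> //.
  apply/astab1P; apply: (cd_pblock_inj cdE) => Q QE; apply/eqP.
  by have := mK _ (imset_f _ QE); rewrite cd_mem_pblock_stab // in_pblockT ?partE // => /andP[].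
have mw' : m w = w := mw.
by rewrite cd_mem_pblock_stab // Mm mw' mem_pblockT ?partE.
Qed.

Lemma Kmap_mul_bigcap K :
  K \in Kmap M w E -> K * (\bigcap_(K' in Kmap M w E :\ K) K') = M.
Proof.
case/mem_Kmap=> P PE ->{K}; have [partP fixP] := cd_inv_partition PE.
apply/eqP; rewrite eqEsubset; apply/andP; split.
  have [K' K'_other] : exists K', K' \in Kmap M w E :\ 'N_M(pblock P w | 'P).
    have [E_ge2 _ _] := cdE; apply/card_gt0P; move: E_ge2.
    by rewrite -card_Kmap (cardsD1 ('N_M(pblock P w | 'P))) (imset_f _ PE).
  apply/subsetP=> _ /mulsgP[k j /setIP[Mk _] Kj ->]; rewrite groupM //.
  have /setD1P[_ /mem_Kmap[Q _ def_K']] := K'_other.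
  by have := bigcapP Kj K' K'_other; rewrite def_K' => /setIP[].
apply/subsetP=> m Mm.
pose f Q := if Q == P then pblock P (m w) else pblock Q w.
have [x fx] : exists x, {in E, forall Q, x \in f Q}.
  apply: (cd_meet cdE) => Q QE; rewrite /f.
  by case: eqP => [->|_]; apply: pblockT_mem; apply: partE.
have [j Mj def_x] := transitive_witness w trM x.
have jK' : j \in \bigcap_(K' in Kmap M w E :\ 'N_M(pblock P w | 'P)) K'.
  apply/bigcapP=> K' /setD1P[neqK' /mem_Kmap[Q QE def_K']]; rewrite def_K'.
  have /negPf QP : Q != P by apply: contraNneq neqK' => eqQP; rewrite def_K' eqQP.
  by have := fx Q QE; rewrite /f QP def_x cd_mem_pblock_stab // Mj.
rewrite -(mulgKV j m) mem_mulg // cd_mem_pblock_stab // groupM ?groupV //= permM.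
have := fx P PE; rewrite /f eqxx def_x in_pblockT // => /eqP eq_jm.
rewrite in_pblockT // pblock_perm_part_id ?fixP ?groupV // -eq_jm.
by rewrite -pblock_perm_part_id ?fixP ?groupV // permK.
Qed.

Lemma Kmap_conj_invariant : conj_invariant G w (Kmap M w E).
Proof.
move=> g /setIP[Gg /astab1P gw] _ /mem_Kmap[P PE ->].
have gw' : g w = w := gw.
suff -> : 'N_M(pblock P w | 'P) :^ g = 'N_M(pblock (perm_part g P) w | 'P).
  exact/imset_f/nEG.
apply/setP=> m; rewrite mem_conjg !cd_mem_pblock_stab ?nEG //.
rewrite memJ_norm ?groupV ?(subsetP (normal_norm nsMG)) //; case: (m \in M) => //=.
have -> : pblock (perm_part g P) w = [set g y | y in pblock P w].
  by rewrite -{1}gw' pblock_perm_part ?partE.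
rewrite -[m w](permKV g) mem_imset_perm.
by rewrite conjgE invgK !permM gw'.
Qed.

Lemma Kmap_cart_system : cart_system M w (Kmap M w E).
Proof.
have [E_ge2 _ _] := cdE; split; rewrite ?card_Kmap ?bigcap_Kmap //.
  by move=> _ /mem_Kmap[P _ ->]; rewrite groupP subsetIl.
exact: Kmap_mul_bigcap.
Qed.

End CDToCartesianSystem.

Lemma Kmap_inj (T : finType) (G M : {group {perm T}}) (w : T) (E1 E2 : {set {set {set T}}}) :
  M <| G -> minnormal M G -> [transitive M, on [set: T] | 'P] -> CD G E1 -> CD G E2 ->
  Kmap M w E1 = Kmap M w E2 -> E1 = E2.
Proof.
move=> nsMG minM trM cdG1 cdG2 eqK.
suff sub12 E E' : CD G E -> CD G E' -> Kmap M w E = Kmap M w E' -> E \subset E'.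
  by apply/eqP; rewrite eqEsubset !sub12.
move=> cdG cdG' eqK'; apply/subsetP=> P PE.
have /imsetP[Q QE eqPQ] : 'N_M(pblock P w | 'P) \in Kmap M w E' by rewrite -eqK' (imset_f _ PE).
have invP := cd_inv_partition nsMG minM trM cdG PE.
by rewrite (pblock_stab_inj trM invP (cd_inv_partition nsMG minM trM cdG' QE) eqPQ).
Qed.

(* A Chinese remainder theorem for the subgroups of a Cartesian system. *)
Lemma cart_system_rcosets_meet (gT : finGroupType) (M : {group gT}) (S : {set {set gT}}) :
  {in S, forall K, group_set K /\ K \subset M} ->
  {in S, forall K, K * (\bigcap_(K' in S :\ K) K') = M} ->
  forall y : {set gT} -> gT, {in S, forall K, y K \in M} ->
  exists2 r, r \in M & {in S, forall K, r \in K :* y K}.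
Proof.
move=> grS mulS y My.
suff [r Mr rK] : exists2 r, r \in M & {in enum S, forall K, r \in K :* y K}.
  by exists r => // K KS; rewrite rK ?mem_enum.
have : {subset enum S <= S} by move=> K; rewrite mem_enum.
elim: (enum S) => [|K s IHs] sS; first by exists 1.
have [r Mr rK] : exists2 r, r \in M & {in s, forall K, r \in K :* y K}.
  by apply: IHs => K1 sK1; apply: sS; rewrite inE sK1 orbT.
have KS : K \in S by apply: sS; rewrite mem_head.
have [gK sKM] := grS K KS; pose KG := Group gK.
have : y K * r^-1 \in M by rewrite groupM ?groupV ?My.
rewrite -{1}(mulS K KS) => /mulsgP[k i Kk capi def_yr].
exists (k^-1 * y K); first by rewrite groupM ?groupV ?My ?(subsetP sKM).
have def_r : k^-1 * y K = i * r by rewrite -(mulgKV r (y K)) def_yr !mulgA mulVg mul1g.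
move=> K'; rewrite in_cons => /orP[/eqP->|sK']; first by rewrite mem_rcoset mulgK (@groupV _ KG).
have [-> | neqK'] := eqVneq K' K; first by rewrite mem_rcoset mulgK (@groupV _ KG).
have K'S : K' \in S by apply: sS; rewrite in_cons sK' orbT.
have [gK' _] := grS K' K'S; pose K'G := Group gK'.
rewrite def_r mem_rcoset -mulgA (@groupM _ K'G) -?mem_rcoset ?rK //.
by apply: (bigcapP capi); rewrite !inE neqK'.
Qed.

Section CartesianSystemToCD.
Variables (T : finType) (G M : {group {perm T}}) (w : T) (S : {set {set {perm T}}}).
Hypotheses (nsMG : M <| G) (trM : [transitive M, on [set: T] | 'P]).
Hypotheses (csS : cart_system M w S) (ciS : conj_invariant G w S).
Implicit Types (K : {set {perm T}}) (m j : {perm T}) (x : T).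

(* For x = m w the block of [Kpart K] through x is w^(K m), as [Kblock K x] is the coset K m. *)
Definition transporter x := [set m in M | m w == x].
Definition Kblock K x := K * transporter x.
Definition Kpart K := preim_partition (Kblock K) [set: T].

Lemma cs_group K : K \in S -> group_set K.
Proof. by case: csS => _ grS _ _ /grS[]. Qed.

Lemma cs_sub K : K \in S -> K \subset M.
Proof. by case: csS => _ grS _ _ /grS[]. Qed.

Lemma cs_stab_sub K : K \in S -> 'C_M[w | 'P] \subset K.
Proof. by case: csS => _ _ <- _; apply: bigcap_inf. Qed.

Lemma transporter_rcoset m : m \in M -> transporter (m w) = 'C_M[w | 'P] :* m.
Proof.
move=> Mm; apply/setP=> j; rewrite mem_rcoset [in LHS]inE in_setI groupMr ?groupV //.
case: (j \in M) => //=; apply/eqP/astab1P=> [jw | ]; rewrite /= /aperm permM.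
  by rewrite jw permK.
by move=> jm_w; rewrite -(permKV m (j w)) jm_w.
Qed.

Lemma Kblock_rcoset K m : K \in S -> m \in M -> Kblock K (m w) = K :* m.
Proof.
move=> KS Mm; rewrite /Kblock transporter_rcoset // mulgA.
by rewrite (@mulGSid _ (Group (cs_group KS)) ('C_M[w | 'P])%G) ?cs_stab_sub.
Qed.

Lemma Kpart_partition K : partition (Kpart K) [set: T].
Proof. exact: preim_partitionP. Qed.

Lemma in_pblock_Kpart K m j : K \in S -> m \in M -> j \in M ->
  (j w \in pblock (Kpart K) (m w)) = (j \in K :* m).
Proof.
move=> KS Mm Mj; rewrite (pblock_equivalence_partition _ (in_setT _) (in_setT _)).
  by rewrite !Kblock_rcoset // eq_sym; apply/eqP/(@rcoset_eqP _ (Group (cs_group KS))).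
by move=> a b c _ _ _; split=> // /eqP->.
Qed.

Lemma Kpart_inv_partition K : K \in S -> inv_partition M (Kpart K).
Proof.
move=> KS; split=> [|m Mm]; first exact: Kpart_partition.
apply: perm_part_preim (can_inj (rcosetK m)) _ => x.
have [j Mj ->] := transitive_witness w trM x.
by rewrite -permM !Kblock_rcoset ?groupM // rcosetM.
Qed.

Lemma Kpart_conj K h : K \in S -> h \in 'C_G[w | 'P] ->
  perm_part h (Kpart K) = Kpart (K :^ h).
Proof.
move=> KS Ch; have KhS := ciS Ch KS; case/setIP: Ch => Gh /astab1P hw.
have hw' : h w = w := hw.
apply: perm_part_preim (can_inj (conjsgK h)) _ => x.
have [j Mj ->] := transitive_witness w trM x.
have Mjh : j ^ h \in M by rewrite memJ_norm // (subsetP (normal_norm nsMG)).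
rewrite -permM conjgC permM hw' !Kblock_rcoset //.
by rewrite conjsMg conjg_set1.
Qed.

Lemma pblock_stab_Kpart K : K \in S -> 'N_M(pblock (Kpart K) w | 'P) = K.
Proof.
move=> KS; apply/setP=> m; rewrite mem_pblock_stab; last exact: Kpart_inv_partition.
have [Mm | notMm] := boolP (m \in M); last first.
  by apply/esym/negbTE; apply: contra notMm; apply: (subsetP (cs_sub KS)).
by rewrite -{2}(perm1 w) in_pblock_Kpart // rcoset1.
Qed.

Lemma Kpart_inj : {in S &, injective Kpart}.
Proof.
by move=> K1 K2 K1S K2S eqK; rewrite -(pblock_stab_Kpart K1S) eqK pblock_stab_Kpart.
Qed.

Lemma Kpart_meet (f : {set {set T}} -> {set T}) :
  {in S, forall K, f (Kpart K) \in Kpart K} -> #|\bigcap_(K in S) f (Kpart K)| = 1%N.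
Proof.
move=> fK; have [_ grS capS mulS] := csS.
have /fin_all_exists[y yK] K : exists m, K \in S ->
    m \in M /\ f (Kpart K) = pblock (Kpart K) (m w).
  have [KS|] := boolP (K \in S); last by exists 1.
  have /set0Pn[x fx] := partT_neq0 (Kpart_partition K) (fK K KS).
  have [m Mm def_x] := transitive_witness w trM x.
  by exists m => _; rewrite -def_x (pblockT_eq (Kpart_partition K) (fK K KS) fx).
have [r Mr rK] := cart_system_rcosets_meet grS mulS (fun K KS => (yK K KS).1).
apply/eqP/cards1P; exists (r w); apply/setP=> x; rewrite inE.
have [j Mj ->] := transitive_witness w trM x.
apply/bigcapP/eqP=> [jK | jw K KS]; last first.
  by have [MyK ->] := yK K KS; rewrite jw in_pblock_Kpart ?rK.
suff : j * r^-1 \in 'C_M[w | 'P].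
  by case/setIP=> _ /astab1P; rewrite /= /aperm permM => jr_w; rewrite -[in RHS]jr_w permKV.
rewrite -capS; apply/bigcapP=> K KS; pose KG := Group (cs_group KS).
have [MyK fyK] := yK K KS; have := jK K KS; rewrite fyK in_pblock_Kpart //.
move/(@rcoset_eqP _ KG) => Kj; rewrite -mem_rcoset; apply/(@rcoset_eqP _ KG).
by rewrite Kj; apply/esym/(@rcoset_eqP _ KG)/rK.
Qed.

Lemma Kpart_cd : CD G (Kpart @: S).
Proof.
have [S_ge2 _ _ _] := csS; split; first split.
- by rewrite card_in_imset //; apply: Kpart_inj.
- by move=> _ /imsetP[K _ ->]; apply: Kpart_partition.
- move=> f fE; rewrite big_imset /=; last exact: Kpart_inj.
  by apply: Kpart_meet => K KS; apply/fE/imset_f.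
move=> g Gg _ /imsetP[K KS ->].
have [m Mm gw] := transitive_witness w trM (g w).
have Ggm : g * m^-1 \in 'C_G[w | 'P].
  rewrite inE groupM ?groupV ?(subsetP (normal_sub nsMG) m Mm) //=.
  by apply/astab1P; rewrite /= /aperm permM gw permK.
have -> : g = (g * m^-1) * m by rewrite mulgKV.
rewrite perm_partM Kpart_conj //.
by rewrite (Kpart_inv_partition (ciS Ggm KS)).2 // imset_f ?ciS.
Qed.

Lemma Kmap_Kpart : Kmap M w (Kpart @: S) = S.
Proof.
rewrite /Kmap -imset_comp -[RHS]imset_id; apply: eq_in_imset => K KS /=.
exact: pblock_stab_Kpart.
Qed.

End CartesianSystemToCD.

Theorem theorem4p2 (T : finType) (G M : {group {perm T}}) (w : T) :
  M <| G -> minnormal M G -> [transitive M, on [set: T] | 'P] ->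
  [/\ forall E, CD G E -> cart_system M w (Kmap M w E) /\ conj_invariant G w (Kmap M w E),
      forall E1 E2, CD G E1 -> CD G E2 -> Kmap M w E1 = Kmap M w E2 -> E1 = E2 &
      forall S, cart_system M w S -> conj_invariant G w S ->
        exists E, CD G E /\ Kmap M w E = S].
Proof.
move=> nsMG minM trM; split.
- by move=> E cdG; split; [apply: Kmap_cart_system nsMG minM trM cdG | apply: Kmap_conj_invariant].
- by move=> E1 E2; apply: Kmap_inj nsMG minM trM.
- by move=> S csS ciS; exists (Kpart M w @: S); split; [apply: Kpart_cd | apply: Kmap_Kpart].
Qed.
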